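(* Assume the standing assumptions in the context. Let $S\subseteq S^*$, $i\in[d]\setminus S$, $n\ge2$, and let $\beta\in\mathbb{R}^d$ be deterministic with $\mathrm{supp}(\beta)\subseteq S$ and $\|\beta\|_2\le 2/\sqrt\rho$. Let $(X_j,Y_j)_{j\in[n]}$ be i.i.d. copies of $(x,y)$, $U_j=|X_{j,i}(X_j^\top\beta-Y_j)|$, and $\tilde V_{i,n}=\frac{1}{n(n-1)}\sum_{1\le l<j\le n}(U_j-U_l)^2$. Then $$\mathbb{E}[\tilde V_{i,n}]\le 20\frac{LM^2}{\rho}.$$
   Context: Standing assumptions: $(x,y)$ random with $x\in\mathbb{R}^d$, $y\in\mathbb{R}$; $\mathbb{E}[x]=0$; $y=\langle\beta^*,x\rangle+\epsilon$ with $\mathbb{E}[\epsilon\mid x]=0$; $S^*=\mathrm{supp}(\beta^* )$, $s^*=|S^*|$; $\Sigma$ the covariance of $x$, $\Sigma_F$ its principal submatrix on $F$; there are $0<\rho\le L$ with all eigenvalues of $\Sigma_F$ in $[\rho,L]$ for all $|F|=s^*$; $|y|<1$ and $\|x\|_\infty<M$ almost surely. $X_{j,i}$ is the $i$-th coordinate of $X_j$. *)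

From HB Require Import structures.
From mathcomp Require Import all_boot all_order all_algebra.
From mathcomp Require Import all_classical all_reals all_analysis.
Set Implicit Arguments. Unset Strict Implicit. Unset Printing Implicit Defensive.
Import Order.TTheory GRing.Theory Num.Theory.
Local Open Scope classical_set_scope.
Local Open Scope ring_scope.

(* The random vector x : T -> R^d, encoded coordinatewise, packed as a d-tuple
   (d.-tuple R carries MathComp-Analysis' product sigma-algebra). *)
Definition vec_of {T : Type} {R : Type} (d : nat) (x : 'I_d -> T -> R)
  : T -> d.-tuple R := fun w => [tuple x k w | k < d].

Definition joint {T : Type} {R : Type} (d : nat) (x : 'I_d -> T -> R)
  (y : T -> R) : T -> d.-tuple R * R := fun w => (vec_of x w, y w).

Definition inner {T : Type} {R : pzRingType} (d : nat) (b : 'I_d -> R)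
  (x : 'I_d -> T -> R) : T -> R := fun w => \sum_(k < d) b k * x k w.

(* E[eps | x] = 0 : eps is integrable and E[eps 1_A] = 0 for every A in the
   sigma-algebra sigma(x) generated by x *)
Definition cond_exp_zero {dT} {T : measurableType dT} {R : realType}
  (P : probability T R) (d : nat) (x : 'I_d -> T -> R) (eps : T -> R) : Prop :=
  P.-integrable setT (EFin \o eps) /\
  forall A : set T, preimage_set_system setT (vec_of x) measurable A ->
    ('E_P[(fun w => eps w * \1_A w)%R] = 0)%E.

Definition covmx {dT} {T : measurableType dT} {R : realType}
  (P : probability T R) (d : nat) (x : 'I_d -> T -> R) : 'M[R]_d :=
  \matrix_(a, b) fine (covariance P (x a) (x b)).

Definition principal_submx {R : Type} (d : nat) (S : 'M[R]_d) (F : {set 'I_d})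
  : 'M[R]_#|F| := \matrix_(a, b) S (enum_val a) (enum_val b).

Definition supp {R : pzRingType} (d : nat) (b : 'I_d -> R) : {set 'I_d} :=
  [set k | b k != 0].

Definition iid_copies {dT dT'} {T : measurableType dT} {T' : measurableType dT'}
  {R : realType} (P : probability T R) (P' : probability T' R) (d n : nat)
  (x : 'I_d -> T -> R) (y : T -> R)
  (X : 'I_n -> 'I_d -> T' -> R) (Y : 'I_n -> T' -> R) : Prop :=
  (forall j (A : set (d.-tuple R * R)), measurable A ->
     P' (joint (X j) (Y j) @^-1` A) = P (joint x y @^-1` A)) /\
  (forall A : 'I_n -> set (d.-tuple R * R), (forall j, measurable (A j)) ->
     P' (\bigcap_(j in [set: 'I_n]) (joint (X j) (Y j) @^-1` A j))
     = (\prod_(j < n) P' (joint (X j) (Y j) @^-1` A j))%E).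

From HB Require Import structures.
From mathcomp Require Import all_boot all_order all_algebra.
From mathcomp Require Import all_classical all_reals all_analysis.
From mathcomp Require Import measurable_realfun complex ring lra.
Set Implicit Arguments. Unset Strict Implicit. Unset Printing Implicit Defensive.
Import Order.TTheory GRing.Theory Num.Theory.
Local Open Scope classical_set_scope.
Local Open Scope ring_scope.

(* 1. Pointwise, since the U_j are nonnegative, (U_j - U_l)^2 <= U_j^2 + U_l^2,
      and counting pairs gives Vt <= (1/n) sum_j U_j^2.  The U_j have the law of
      U = |x_i (<beta, x> - y)|, so E[Vt] <= E[U^2].
   2. Almost surely |x_i| < M and |y| < 1, hence U^2 <= 2M^2 <beta, x>^2 + 2M^2;
      as x is centred, E[<beta, x>^2] = beta^T Sigma beta.
   3. beta vanishes outside the support F of beta*, so beta^T Sigma beta is a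
      quadratic form of the principal submatrix Sigma_F, whose eigenvalues are
      at most L.  The Rayleigh bound (from the complex spectral theorem) gives
      beta^T Sigma beta <= L |beta|^2 <= 4 L / rho.
   Altogether E[Vt] <= 8 L M^2 / rho + 2 M^2 <= 20 L M^2 / rho. *)

Section HermitianRayleigh.
Variable C : numClosedFieldType.
Local Open Scope sesquilinear_scope.

(* The eigenvalues of a hermitian matrix are real: if v A = a v with v <> 0,
   then a |v|^2 = v A v^t* is self-adjoint. *)
Lemma hermitian_eigenvalue_real n (A : 'M[C]_n) a :
  A \is hermsymmx -> eigenvalue A a -> a \is Num.real.
Proof.
move=> Aherm /eigenvalueP [v vA v0].
have AtC : A ^t* = A.
  by have := is_hermitianmxP _ _ _ Aherm; rewrite expr0 scale1r => <-.
set Q := v *m A *m v ^t*.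
have QtC : Q ^t* = Q by rewrite /Q !trmx_mul !map_mxM trmxCK AtC mulmxA.
have QE : Q = a *: (v *m v ^t*) by rewrite /Q vA scalemxAl.
have : (a^* - a) *: (v *m v ^t*) = 0.
  rewrite scalerBl -QE; apply/eqP; rewrite subr_eq0; apply/eqP.
  by rewrite -[in RHS]QtC QE linearZ/= map_mxZ trmx_mul map_mxM trmxCK.
move=> /eqP; rewrite scaler_eq0 => /orP[|vv0]; first by rewrite subr_eq0 => /eqP/CrealP.
have : dotmx v v == 0 by rewrite dotmxE (eqP vv0) mxE.
by rewrite (dnorm_eq0 (@dotmx _ n)) (negbTE v0).
Qed.

Lemma quad_form_conj_diag n (P : 'M[C]_n) (D : 'I_n -> C) (w : 'I_n -> C) :
  \sum_a \sum_b (w a)^* * (\sum_k (P k a)^* * D k * P k b) * w b =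
  \sum_k D k * ((\sum_b P k b * w b)^* * (\sum_b P k b * w b)).
Proof.
transitivity (\sum_a \sum_b \sum_k D k * ((P k a * w a)^* * (P k b * w b))).
  apply: eq_bigr => a _; apply: eq_bigr => b _.
  rewrite big_distrr big_distrl /=; apply: eq_bigr => k _.
  by rewrite rmorphM /=; ring.
under eq_bigr do rewrite exchange_big /=.
rewrite exchange_big /=; apply: eq_bigr => k _.
rewrite rmorph_sum /= big_distrl /= big_distrr /=; apply: eq_bigr => a _.
by rewrite big_distrr /= big_distrr.
Qed.

(* Rayleigh bound for a normal matrix A whose eigenvalues are at most L:
   w^* A w <= L w^* w, by diagonalising A in a unitary basis. *)
Lemma normal_rayleigh n (A : 'M[C]_n) (L : C) (w : 'I_n -> C) :
  A \is normalmx -> (forall a, eigenvalue A a -> a <= L) ->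
  \sum_a \sum_b (w a)^* * A a b * w b <= L * \sum_a (w a)^* * w a.
Proof.
move=> Anormal eigL.
set P := spectralmx A; set D := spectral_diag A.
have Pu : P \is unitarymx := spectral_unitarymx A.
have PPt : P *m P^t* = 1%:M by apply/unitarymxP.
have AE : A = P^t* *m diag_mx D *m P.
  by rewrite -invmx_unitary //; exact/orthomx_spectralP.
have AEij a b : A a b = \sum_k (P k a)^* * D 0 k * P k b.
  by rewrite {1}AE mxE; apply: eq_bigr => k _; rewrite mul_mx_diag !mxE.
have IEij a b : (1%:M : 'M[C]_n) a b = \sum_k (P k a)^* * 1 * P k b.
  by rewrite -(mulmx1C PPt) mxE; apply: eq_bigr => k _; rewrite !mxE mulr1.
have DleL k : D 0 k <= L.
  apply: eigL; apply/eigenvalueP; exists (row k P).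
    rewrite -row_mul AE !mulmxA PPt mul1mx mul_diag_mx; apply/rowP => j.
    by rewrite !mxE.
  apply/eqP => /(congr1 (fun M => M *m P^t*)); rewrite -row_mul PPt mul0mx.
  by move=> /rowP/(_ k); rewrite !mxE eqxx => /eqP; rewrite oner_eq0.
have normE : \sum_a (w a)^* * w a = \sum_a \sum_b (w a)^* * 1%:M a b * w b.
  apply: eq_bigr => a _; rewrite (bigD1 a) //= big1 => [|b nb].
    by rewrite mxE eqxx mulr1 addr0.
  by rewrite mxE eq_sym (negbTE nb) mulr0 mul0r.
rewrite normE; under eq_bigr do under eq_bigr do rewrite AEij.
under [X in _ <= _ * X]eq_bigr do under eq_bigr do rewrite IEij.
rewrite !quad_form_conj_diag big_distrr /=; apply: ler_sum => k _.
by rewrite mul1r; apply: ler_wpM2r => //; rewrite mulrC mul_conjC_ge0.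
Qed.

End HermitianRayleigh.

Section SymmetricRayleigh.
Variable R : rcfType.
Local Notation f := (real_complex R).

Lemma conj_real_complex (x : R) : (f x)^* = f x.
Proof.
by apply: conj_Creal; rewrite realE -(rmorph0 f) !lecR; exact: le_total.
Qed.

Lemma real_complexRe (z : R[i]) : z \is Num.real -> z = f (complex.Re z).
Proof. by move/Creal_ReP => h; rewrite complexRe h. Qed.

(* Rayleigh bound for a real symmetric matrix, through its hermitian
   complexification, whose (real) eigenvalues are those of A. *)
Lemma symmetric_rayleigh n (A : 'M[R]_n) (L : R) (w : 'I_n -> R) :
  A^T = A -> (forall a, eigenvalue A a -> a <= L) ->
  \sum_a \sum_b w a * A a b * w b <= L * \sum_a w a ^+ 2.
Proof.
move=> Asym eigL; set AC := map_mx f A.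
have ACherm : AC \is hermsymmx.
  apply/is_hermitianmxP; rewrite expr0 scale1r; apply/matrixP => a b.
  by rewrite !mxE conj_real_complex -[in RHS]Asym mxE.
have eigC a : eigenvalue AC a -> a <= f L.
  move=> ea; have aE := real_complexRe (hermitian_eigenvalue_real ACherm ea).
  rewrite aE lecR; apply: eigL; move: ea.
  by rewrite aE !eigenvalue_root_char -map_char_poly fmorph_root.
have := normal_rayleigh (fun a => f (w a)) (hermitian_normalmx ACherm) eigC.
rewrite -lecR rmorphM !rmorph_sum /=.
congr (_ <= _ * _); apply: eq_bigr => a _; rewrite conj_real_complex.
  by rewrite rmorph_sum; apply: eq_bigr => b _; rewrite !rmorphM mxE.
by rewrite rmorphXn expr2.
Qed.

Lemma principal_rayleigh d (S : 'M[R]_d) (F : {set 'I_d}) (b : 'I_d -> R)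
    (L : R) :
  S^T = S -> (forall k, k \notin F -> b k = 0) ->
  (forall a, eigenvalue (principal_submx S F) a -> a <= L) ->
  \sum_a \sum_c b a * S a c * b c <= L * \sum_a b a ^+ 2.
Proof.
move=> Ssym bF eigL.
have SFsym : (principal_submx S F)^T = principal_submx S F.
  by apply/matrixP => a c; rewrite !mxE -[in RHS]Ssym mxE.
have restrict (G : 'I_d -> R) : (forall k, k \notin F -> G k = 0) ->
    \sum_k G k = \sum_(a < #|F|) G (enum_val a).
  move=> GF; rewrite -big_enum_val [LHS](bigID (mem F)) /=.
  by rewrite [X in _ + X]big1 ?addr0 // => k kF; apply: GF.
have normE : \sum_a b a ^+ 2 = \sum_(a < #|F|) b (enum_val a) ^+ 2.
  by apply: (restrict (fun a => b a ^+ 2)) => k kF; rewrite bF // expr0n.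
have quadE : \sum_a \sum_c b a * S a c * b c = \sum_(a < #|F|) \sum_(c < #|F|)
    b (enum_val a) * principal_submx S F a c * b (enum_val c).
  rewrite (restrict (fun a => \sum_c b a * S a c * b c)); last first.
    by move=> k kF; rewrite big1 // => c _; rewrite bF // !mul0r.
  apply: eq_bigr => a _.
  rewrite (restrict (fun c => b (enum_val a) * S (enum_val a) c * b c)).
    by apply: eq_bigr => c _; rewrite mxE.
  by move=> k kF; rewrite (bF k kF) mulr0.
by rewrite normE quadE; exact: symmetric_rayleigh.
Qed.

End SymmetricRayleigh.

Section PairSums.
Variable R : pzRingType.

Lemma sum_pairs_lt n (a : 'I_n -> R) : (0 < n)%N ->
  \sum_(l < n) \sum_(j < n | (l < j)%N) (a j + a l) = (n - 1)%:R * \sum_j a j.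
Proof.
move=> n0.
have splitE (l : 'I_n) : \sum_(j < n | (l < j)%N) (a j + a l) =
    \sum_(j < n) (if (l < j)%N then a j else 0)
    + \sum_(j < n) (if (l < j)%N then a l else 0).
  by rewrite big_split /= !(big_mkcond (fun j : 'I_n => (l < j)%N)).
have othersE (l : 'I_n) :
    \sum_(j < n) ((if (l < j)%N then a j else 0) + (if (j < l)%N then a j else 0))
    = \sum_j a j - a l.
  rewrite [X in _ = X - _](bigD1 l) //= addrAC subrr add0r.
  rewrite [RHS]big_mkcond /=; apply: eq_bigr => j _.
  have [lj|jl|/val_inj <-] := ltngtP l j; last by rewrite eqxx addr0.
  - by rewrite gt_eqF ?addr0.
  - by rewrite lt_eqF ?add0r.
rewrite (eq_bigr _ (fun l _ => splitE l)) big_split /= [X in _ + X]exchange_big /=.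
rewrite -big_split /=; under eq_bigr do rewrite -big_split /=.
rewrite (eq_bigr _ (fun l _ => othersE l)) sumrB sumr_const card_ord natrB //.
by rewrite mulrBl mul1r mulr_natl.
Qed.

End PairSums.

Section UStatistic.
Variable R : realFieldType.

(* For nonnegative u, the U-statistic variance estimate is at most the mean of
   the squares, since (u_j - u_l)^2 <= u_j^2 + u_l^2. *)
Lemma ustat_var_le_mean_sq n (u : 'I_n -> R) : (2 <= n)%N ->
  (forall j, 0 <= u j) ->
  (n * (n - 1))%:R^-1 * \sum_(l < n) \sum_(j < n | (l < j)%N) (u j - u l) ^+ 2
  <= n%:R^-1 * \sum_j u j ^+ 2.
Proof.
move=> n2 u0.
have n1 : (n - 1)%:R != 0 :> R by rewrite pnatr_eq0 -lt0n subn_gt0.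
have cE : (n * (n - 1))%:R^-1 * (n - 1)%:R = n%:R^-1 :> R.
  by rewrite natrM invfM -mulrA mulVf ?mulr1.
have diff_le : \sum_(l < n) \sum_(j < n | (l < j)%N) (u j - u l) ^+ 2 <=
    \sum_(l < n) \sum_(j < n | (l < j)%N) (u j ^+ 2 + u l ^+ 2).
  apply: ler_sum => l _; apply: ler_sum => j _.
  have := mulr_ge0 (u0 j) (u0 l); nra.
rewrite sum_pairs_lt ?(leq_trans _ n2) // in diff_le.
apply: le_trans (ler_wpM2l _ diff_le) _; first by rewrite invr_ge0 ler0n.
by rewrite mulrA cE.
Qed.

End UStatistic.

Section Integration.
Context {R : realType}.

Lemma integrable_ae_bounded {d} {T : measurableType d} (P : probability T R)
    (f : T -> R) (c : R) :
  0 <= c -> measurable_fun setT f -> {ae P, forall w, `|f w| <= c} ->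
  P.-integrable setT (EFin \o f).
Proof.
move=> c0 mf fc; apply/integrableP; split; first exact/measurable_EFinP.
apply: (@le_lt_trans _ _ (c%:E * P setT)%E).
  apply: integral_le_bound => //; first exact/measurable_EFinP.
  by apply: filterS fc => w fw _ /=; rewrite lee_fin.
by rewrite probability_setT mule1 ltey.
Qed.

Lemma integral_same_law {d1 d2 dV} (T1 : measurableType d1)
    (T2 : measurableType d2) (V : measurableType dV)
    (P1 : {measure set T1 -> \bar R}) (P2 : {measure set T2 -> \bar R})
    (phi1 : T1 -> V) (phi2 : T2 -> V) (g : V -> \bar R) :
  measurable_fun setT phi1 -> measurable_fun setT phi2 ->
  measurable_fun setT g -> (forall v, (0 <= g v)%E) ->
  (forall A, measurable A -> P1 (phi1 @^-1` A) = P2 (phi2 @^-1` A)) ->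
  (\int[P1]_w g (phi1 w) = \int[P2]_w g (phi2 w))%E.
Proof.
move=> m1 m2 mg g0 law.
transitivity (\int[pushforward P1 phi1]_v g v)%E.
  by rewrite ge0_integral_pushforward.
transitivity (\int[pushforward P2 phi2]_v g v)%E; last first.
  by rewrite ge0_integral_pushforward.
by apply: eq_measure_integral => A mA _; exact: law.
Qed.

Lemma measurable_joint {dT} {T : measurableType dT} d (x : 'I_d -> T -> R)
    (y : T -> R) :
  (forall k, measurable_fun setT (x k)) -> measurable_fun setT y ->
  measurable_fun setT (joint x y).
Proof.
move=> mx my; apply/measurable_fun_pairP; split => //.
apply/measurable_fun_tnthP => k.
by rewrite (_ : _ \o _ = x k) //; apply/funext => w /=; rewrite tnth_mktuple.
Qed.

Lemma measurable_inner {dT} {T : measurableType dT} d (b : 'I_d -> R)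
    (x : 'I_d -> T -> R) :
  (forall k, measurable_fun setT (x k)) -> measurable_fun setT (inner b x).
Proof.
move=> mx; apply: measurable_sum => k.
by apply: measurable_funM => //; exact: measurable_cst.
Qed.

End Integration.

Section Moments.
Context {R : realType} {dT} {T : measurableType dT} (P : probability T R).
Variables (d : nat) (x : 'I_d -> T -> R) (M : R).
Hypotheses (mx : forall k, measurable_fun setT (x k))
  (centered : forall k, ('E_P[x k] = 0)%E)
  (bounded : {ae P, forall w, forall k, `|x k w| < M}).

Let integrable_prod a c : P.-integrable setT (EFin \o (fun w => x a w * x c w)).
Proof.
apply: (@integrable_ae_bounded _ _ _ _ _ (M ^+ 2)).
- exact: sqr_ge0.
- exact: measurable_funM.
apply: filterS bounded => w xM; rewrite normrM expr2.
by apply: ler_pM => //; exact: ltW.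
Qed.

Lemma covmx_centered a c :
  (covmx P x a c)%:E = (\int[P]_w (x a w * x c w)%:E)%E.
Proof.
have covE : covariance P (x a) (x c) = (\int[P]_w (x a w * x c w)%:E)%E.
  rewrite covariance.unlock !centered expectation.unlock.
  apply: eq_integral => w _.
  by rewrite (_ : ((x a \- cst 0) * (x c \- cst 0)) w = (x a w - 0) * (x c w - 0))
       // !subr0.
by rewrite mxE covE fineK //; apply: integrable_fin_num => //; exact: integrable_prod.
Qed.

Lemma second_moment_inner (b : 'I_d -> R) :
  (\int[P]_w ((inner b x w) ^+ 2)%:E =
     (\sum_a \sum_c b a * covmx P x a c * b c)%:E)%E.
Proof.
have sqE w : inner b x w ^+ 2 = \sum_a \sum_c b a * b c * (x a w * x c w).
  rewrite /inner expr2 big_distrl /=; apply: eq_bigr => a _.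
  by rewrite big_distrr /=; apply: eq_bigr => c _; ring.
have int_term a c :
    P.-integrable setT (fun w => ((b a * b c) * (x a w * x c w))%:E).
  under eq_fun do rewrite EFinM; exact: integrableZl (integrable_prod a c).
under eq_integral do rewrite sqE -sumEFin.
rewrite (integral_sum measurableT); last first.
  move=> a; under eq_fun do rewrite -sumEFin.
  by apply: (integrable_sum measurableT) => c _; exact: int_term.
rewrite -sumEFin; apply: eq_bigr => a _.
under eq_integral do rewrite -sumEFin.
rewrite (integral_sum measurableT); last by move=> c; exact: int_term.
rewrite -sumEFin; apply: eq_bigr => c _.
under eq_integral do rewrite EFinM.
rewrite (integralZl measurableT (integrable_prod a c)) -covmx_centered -EFinM.
by congr (_%:E); ring.
Qed.

End Moments.

Section UStatisticExpectation.
Context {R : realType} {dT} {T : measurableType dT} (P : probability T R).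

Definition ustat_var n (U : 'I_n -> T -> R) (w : T) : R :=
  (n * (n - 1))%:R^-1 * \sum_(l < n) \sum_(j < n | (l < j)%N) (U j w - U l w) ^+ 2.

Lemma expectation_ustat_var_le n (U : 'I_n -> T -> R) (K : \bar R) :
  (2 <= n)%N -> (forall j, measurable_fun setT (U j)) ->
  (forall j w, 0 <= U j w) ->
  (forall j, \int[P]_w (U j w ^+ 2)%:E = K)%E ->
  ('E_P[ustat_var U] <= K)%E.
Proof.
move=> n2 mU U0 UK; set c : R := n%:R^-1.
have c0 : 0 <= c by rewrite invr_ge0 ler0n.
have mUsq j : measurable_fun setT (fun w => U j w ^+ 2) by exact: measurable_funX.
have mVt : measurable_fun setT (ustat_var U).
  apply: measurable_funM; first exact: measurable_cst.
  apply: measurable_sum => l; under eq_fun do rewrite big_mkcond /=.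
  apply: measurable_sum => j; case: (l < j)%N; last exact: measurable_cst.
  by apply: measurable_funX; apply: measurable_funB.
rewrite expectation.unlock.
apply: (@le_trans _ _ (\int[P]_w (c * \sum_j U j w ^+ 2)%:E)%E).
  apply: ge0_le_integral => //.
  - move=> w _; rewrite lee_fin mulr_ge0 ?invr_ge0 ?ler0n //.
    by do 2 apply: sumr_ge0 => ? _; exact: sqr_ge0.
  - exact/measurable_EFinP.
  - apply/measurable_EFinP; apply: measurable_funM; first exact: measurable_cst.
    exact: measurable_sum.
  - by move=> w _; rewrite lee_fin; apply: ustat_var_le_mean_sq.
under eq_integral do rewrite EFinM -sumEFin.
rewrite ge0_integralZl //; last 2 first.
- by apply: emeasurable_sum => j; exact/measurable_EFinP.
- by move=> w _; rewrite sume_ge0 // => j _; rewrite lee_fin sqr_ge0.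
rewrite ge0_integral_sum //; last 2 first.
- by move=> j; exact/measurable_EFinP.
- by move=> j w _; rewrite lee_fin sqr_ge0.
rewrite (eq_bigr _ (fun j _ => UK j)) sumr_const card_ord.
have -> : (K *+ n)%R = (n%:R%:E * K)%E by rewrite mule_natl.
by rewrite muleA -EFinM /c mulVf ?mul1e // pnatr_eq0 -lt0n (leq_trans _ n2).
Qed.

End UStatisticExpectation.

Section Residual.
Context {R : realType}.

Definition residual_sq d (i : 'I_d) (beta : 'I_d -> R) (p : d.-tuple R * R) : R :=
  (tnth p.1 i * (\sum_(k < d) beta k * tnth p.1 k - p.2)) ^+ 2.

Lemma residual_sq_joint {T : Type} d (i : 'I_d) beta (x : 'I_d -> T -> R)
    (y : T -> R) (w : T) :
  residual_sq i beta (joint x y w) = (x i w * (inner beta x w - y w)) ^+ 2.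
Proof.
rewrite /residual_sq /joint /vec_of /inner /= tnth_mktuple.
by congr ((_ * (_ - _)) ^+ 2); apply: eq_bigr => k _; rewrite tnth_mktuple.
Qed.

Lemma measurable_residual_sq d (i : 'I_d) beta :
  measurable_fun setT (residual_sq i beta).
Proof.
have mcoord k : measurable_fun setT (fun p : d.-tuple R * R => tnth p.1 k).
  apply: (measurableT_comp (f := fun t : d.-tuple R => tnth t k)).
    exact: measurable_tnth.
  exact: measurable_fst.
apply: measurable_funX; apply: measurable_funM; first exact: mcoord.
apply: measurable_funB; last exact: measurable_snd.
apply: measurable_sum => k.
by apply: measurable_funM; [exact: measurable_cst | exact: mcoord].
Qed.

Lemma residual_sq_same_law {dT dT'} {T : measurableType dT}
    {T' : measurableType dT'} (P : probability T R) (P' : probability T' R)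
    d (i : 'I_d) beta (x : 'I_d -> T -> R) (y : T -> R)
    (X : 'I_d -> T' -> R) (Y : T' -> R) :
  (forall k, measurable_fun setT (x k)) -> measurable_fun setT y ->
  (forall k, measurable_fun setT (X k)) -> measurable_fun setT Y ->
  (forall A, measurable A -> P' (joint X Y @^-1` A) = P (joint x y @^-1` A)) ->
  (\int[P']_w ((X i w * (inner beta X w - Y w)) ^+ 2)%:E =
   \int[P]_w ((x i w * (inner beta x w - y w)) ^+ 2)%:E)%E.
Proof.
move=> mx my mX mY law.
under eq_integral do rewrite -residual_sq_joint.
under [RHS]eq_integral do rewrite -residual_sq_joint.
apply: (integral_same_law (g := EFin \o residual_sq i beta)) => //.
- exact: measurable_joint.
- exact: measurable_joint.
- by apply/measurable_EFinP; exact: measurable_residual_sq.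
- by move=> p; rewrite /= lee_fin sqr_ge0.
Qed.

Lemma residual_sq_le (a q z M : R) : `|a| <= M -> `|z| <= 1 ->
  (a * (q - z)) ^+ 2 <= M ^+ 2 * 2 * q ^+ 2 + M ^+ 2 * 2.
Proof.
move=> aM z1.
have a2 : a ^+ 2 <= M ^+ 2.
  by rewrite -(real_normK (num_real a)) !expr2 ler_pM.
have z2 : z ^+ 2 <= 1.
  by rewrite -(real_normK (num_real z)) !expr2 -[1]mulr1 ler_pM.
have qz : (q - z) ^+ 2 <= 2 * q ^+ 2 + 2 by have := sqr_ge0 (q + z); nra.
rewrite exprMn; apply: le_trans (ler_wpM2r (sqr_ge0 _) a2) _.
have := sqr_ge0 M; nra.
Qed.

End Residual.

Section ResidualMoment.
Context {R : realType} {dT} {T : measurableType dT} (P : probability T R).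

Lemma residual_moment_le d (x : 'I_d -> T -> R) (y : T -> R) (i : 'I_d)
    (beta : 'I_d -> R) (M : R) :
  (forall k, measurable_fun setT (x k)) -> measurable_fun setT y ->
  (forall k, ('E_P[x k] = 0)%E) ->
  {ae P, forall w, forall k, `|x k w| < M} -> {ae P, forall w, `|y w| < 1} ->
  (\int[P]_w ((x i w * (inner beta x w - y w)) ^+ 2)%:E <=
   (M ^+ 2 * 2 * (\sum_a \sum_c beta a * covmx P x a c * beta c)
    + M ^+ 2 * 2)%:E)%E.
Proof.
move=> mx my centered xM y1.
have minner := measurable_inner beta mx.
have c0 : 0 <= M ^+ 2 * 2 by rewrite mulr_ge0 ?sqr_ge0.
apply: (@le_trans _ _
  (\int[P]_w ((M ^+ 2 * 2) * inner beta x w ^+ 2 + M ^+ 2 * 2)%:E)%E).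
  apply: ae_ge0_le_integral => //.
  - by move=> w _; rewrite lee_fin sqr_ge0.
  - apply/measurable_EFinP; apply: measurable_funX; apply: measurable_funM => //.
    exact: measurable_funB.
  - by move=> w _; rewrite lee_fin addr_ge0 // mulr_ge0 // sqr_ge0.
  - apply/measurable_EFinP; apply: measurable_funD; last exact: measurable_cst.
    apply: measurable_funM; first exact: measurable_cst.
    exact: measurable_funX.
  apply: filterS2 xM y1 => w xw yw _; rewrite lee_fin.
  by apply: residual_sq_le; apply: ltW.
under eq_integral do rewrite EFinD EFinM.
rewrite ge0_integralD //; last 2 first.
- by move=> w _; rewrite -EFinM lee_fin mulr_ge0 // sqr_ge0.
- under eq_fun do rewrite -EFinM.
  apply/measurable_EFinP; apply: measurable_funM; first exact: measurable_cst.
  exact: measurable_funX.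
rewrite ge0_integralZl //; last 2 first.
- by apply/measurable_EFinP; exact: measurable_funX.
- by move=> w _; rewrite lee_fin sqr_ge0.
rewrite (second_moment_inner mx centered xM) integral_cst //=.
by rewrite probability_setT mule1 -EFinM -EFinD.
Qed.

End ResidualMoment.

Section Constants.
Variable R : rcfType.

Lemma sqr_le_of_sqrt_le (s r c : R) : 0 <= s -> 0 < r -> 0 <= c ->
  Num.sqrt s <= c / Num.sqrt r -> s <= c ^+ 2 / r.
Proof.
move=> s0 r0 c0 le_sqrt.
rewrite -(sqr_sqrtr s0) -[r in _ / r](sqr_sqrtr (ltW r0)) -expr_div_n.
by rewrite lerXn2r ?nnegrE ?sqrtr_ge0 // divr_ge0 ?sqrtr_ge0.
Qed.

Lemma variance_constant_le (L rho M2 q s : R) : 0 < rho -> rho <= L ->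
  0 <= M2 -> q <= L * s -> s <= 2 ^+ 2 / rho ->
  M2 * 2 * q + M2 * 2 <= 20 * L * M2 / rho.
Proof.
move=> rho0 rhoL M0 qs s4.
set r := L / rho.
have r1 : 1 <= r by rewrite /r ler_pdivlMr // mul1r.
have L0 : 0 <= L by apply: le_trans rhoL; exact: ltW.
have qr : q <= 4 * r.
  apply: (le_trans qs); apply: le_trans (ler_wpM2l L0 s4) _.
  by rewrite /r mulrCA; lra.
have -> : 20 * L * M2 / rho = 20 * M2 * r by rewrite /r; field; exact: lt0r_neq0.
nra.
Qed.

End Constants.

Theorem mainTheorem6
  (R : realType) (dT dT' : measure_display)
  (T : measurableType dT) (P : probability T R)
  (d : nat) (x : 'I_d -> T -> R) (y : T -> R) (betastar : 'I_d -> R)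
  (rho L M : R)
  (hxm : forall k, measurable_fun setT (x k))
  (hym : measurable_fun setT y)
  (hEx : forall k, ('E_P[x k] = 0)%E)
  (hcond : cond_exp_zero P x (fun w => y w - inner betastar x w))
  (hrho : 0 < rho) (hrhoL : rho <= L)
  (heig : forall F : {set 'I_d}, #|F| = #|supp betastar| ->
     forall a : R, eigenvalue (principal_submx (covmx P x) F) a ->
       rho <= a <= L)
  (hy : {ae P, forall w, `|y w| < 1})
  (hx : {ae P, forall w, forall k, `|x k w| < M})
  (S : {set 'I_d}) (hS : S \subset supp betastar)
  (i : 'I_d) (hi : i \notin S)
  (n : nat) (hn : (2 <= n)%N)
  (beta : 'I_d -> R) (hbeta : supp beta \subset S)
  (hnorm : Num.sqrt (\sum_(k < d) beta k ^+ 2) <= 2 / Num.sqrt rho)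
  (T' : measurableType dT') (P' : probability T' R)
  (X : 'I_n -> 'I_d -> T' -> R) (Y : 'I_n -> T' -> R)
  (hXm : forall j k, measurable_fun setT (X j k))
  (hYm : forall j, measurable_fun setT (Y j))
  (hiid : iid_copies P P' x y X Y) :
  let U := fun (j : 'I_n) (w : T') =>
    `|X j i w * (inner beta (X j) w - Y j w)| in
  let Vt := fun w : T' =>
    (n * (n - 1))%:R^-1 *
      \sum_(l < n) \sum_(j < n | (l < j)%N) (U j w - U l w) ^+ 2 in
  ('E_P'[Vt] <= (20 * L * M ^+ 2 / rho)%:E)%E.
Proof.
pose U j w := `|X j i w * (inner beta (X j) w - Y j w)|.
suff : ('E_P'[ustat_var U] <= (20 * L * M ^+ 2 / rho)%:E)%E by move=> ?; exact.
have beta_sq : \sum_(k < d) beta k ^+ 2 <= 2 ^+ 2 / rho.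
  by apply: sqr_le_of_sqrt_le => //; apply: sumr_ge0 => k _; exact: sqr_ge0.
have quad_le : \sum_a \sum_c beta a * covmx P x a c * beta c
    <= L * \sum_(k < d) beta k ^+ 2.
  apply: (principal_rayleigh (F := supp betastar)).
  - by apply/matrixP => a c; rewrite !mxE covarianceC.
  - move=> k kF; apply/eqP; apply: contraNT kF => bk.
    by apply: (fintype.subsetP hS); apply: (fintype.subsetP hbeta); rewrite inE.
  - by move=> a /(heig _ erefl) /andP[].
have same_moment j : (\int[P']_w (U j w ^+ 2)%:E =
    \int[P]_w ((x i w * (inner beta x w - y w)) ^+ 2)%:E)%E.
  under eq_integral do rewrite real_normK ?num_real //.
  by apply: residual_sq_same_law => //; exact: hiid.1.
have U0 j w : 0 <= U j w by exact: normr_ge0.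
have mU j : measurable_fun setT (U j).
  apply: measurableT_comp; first exact: normr_measurable.
  apply: measurable_funM => //; apply: measurable_funB => //.
  exact: measurable_inner.
apply: le_trans (expectation_ustat_var_le hn mU U0 same_moment) _.
apply: le_trans (residual_moment_le i beta hxm hym hEx hx hy) _.
rewrite lee_fin; apply: (variance_constant_le (s := \sum_(k < d) beta k ^+ 2)) => //.
exact: sqr_ge0.
Qed.
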